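(* Let $(V,g)$ be a Euclidean vector space and $\mathfrak{g}\subseteq\mathfrak{so}(V)$ a nonzero Lie subalgebra. If there is a nonzero spinor $x$ with $\mathfrak{g}x=0$ (for the spin representation of $\mathfrak{spin}(V)\cong\mathfrak{so}(V)$), then $T^{\mathfrak{g}}\neq0$.
   Context: $\Lambda^2V$ is identified with $\mathfrak{so}(V)$ via the metric, with the standard inner product on forms. $T^{\mathfrak{g}}=\sum_kx_k\wedge x_k\in\Lambda^4V$ for an orthonormal basis $\{x_k\}$ of $\mathfrak{g}\subseteq\Lambda^2V$ (the characteristic form of $(\mathfrak{g},V)$). *)

From HB Require Import structures.
From mathcomp Require Import all_boot all_order all_algebra.
Set Implicit Arguments. Unset Strict Implicit. Unset Printing Implicit Defensive.
Import Order.TTheory GRing.Theory Num.Theory.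
Local Open Scope ring_scope.

(* Conventions: C is an algebraically closed numeric field (e.g. the complex
   numbers); the real scalars are its real elements.  V = standard Euclidean
   space of dimension n (real coordinates, standard metric).  so(V) = real
   skew-symmetric n x n matrices, identified with Lambda^2 V by
   e_i /\ e_j  <->  E_ij - E_ji, i.e. a 2-form is given by its skew component
   matrix A (A i j = coefficient of e_i /\ e_j for i < j). *)

Section Defs.
Variable C : numClosedFieldType.
Variable n : nat.

Definition real_mx (A : 'M[C]_n) : Prop := forall i j, A i j \is Num.real.
Definition skew_mx (A : 'M[C]_n) : Prop := A^T = - A.
Definition so_elt (A : 'M[C]_n) : Prop := real_mx A /\ skew_mx A.

Definition lie_bracket (A B : 'M[C]_n) : 'M[C]_n := A *m B - B *m A.

Definition is_lie_subalgebra (g : 'M[C]_n -> Prop) : Prop :=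
  [/\ (forall A, g A -> so_elt A), g 0,
      (forall (a : C) A B, a \is Num.real -> g A -> g B -> g (a *: A + B))
    & (forall A B, g A -> g B -> g (lie_bracket A B))].

Definition nonzero_sub (g : 'M[C]_n -> Prop) : Prop := exists A, g A /\ A != 0.

(* standard inner product of 2-forms: e_i /\ e_j (i<j) orthonormal *)
Definition form_dot (A B : 'M[C]_n) : C :=
  \sum_(i < n) \sum_(j < n | (i < j)%N) A i j * B i j.

Definition is_orthonormal_basis (g : 'M[C]_n -> Prop) (m : nat)
    (x : 'I_m -> 'M[C]_n) : Prop :=
  [/\ (forall k, g (x k)),
      (forall k l, form_dot (x k) (x l) = (k == l)%:R)
    & (forall A, g A -> exists c : 'I_m -> C,
          (forall k, c k \is Num.real) /\ A = \sum_(k < m) c k *: x k)].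

(* components of the 4-form A /\ B for 2-forms A, B (as skew matrices):
   (A /\ B) = sum_{i<j<k<l} (wedge22 A B i j k l) e_i/\e_j/\e_k/\e_l,
   extended to all index quadruples as the totally antisymmetric function *)
Definition wedge22 (A B : 'M[C]_n) (i j k l : 'I_n) : C :=
  A i j * B k l - A i k * B j l + A i l * B j k
  + A j k * B i l - A j l * B i k + A k l * B i j.

Definition char_form (m : nat) (x : 'I_m -> 'M[C]_n) (i j k l : 'I_n) : C :=
  \sum_(q < m) wedge22 (x q) (x q) i j k l.

Definition spin_dim : nat := 2 ^ n./2.

Definition clifford_rep (gam : 'I_n -> 'M[C]_spin_dim) : Prop :=
  forall i j, gam i *m gam j + gam j *m gam i = (- 2 * (i == j)%:R)%:M.

Definition spin_act (gam : 'I_n -> 'M[C]_spin_dim) (A : 'M[C]_n)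
  : 'M[C]_spin_dim :=
  \sum_(i < n) \sum_(j < n) (A i j / 4%:R) *: (gam i *m gam j).

End Defs.

From HB Require Import structures.
From mathcomp Require Import all_boot all_order all_algebra ring.
Import Order.TTheory GRing.Theory Num.Theory.
Set Implicit Arguments. Unset Strict Implicit. Unset Printing Implicit Defensive.
Local Open Scope ring_scope.

(* Let x_1, ..., x_m be an orthonormal basis of g and P = sum_q x_q (x) x_q the
   4-tensor P_ijkl = sum_q (x_q)_ij (x_q)_kl; write g_i for the Clifford
   generators and rho for the spin action, so that sum_ij A_ij g_i g_j = 4 rho(A).
   (1) Q := sum P_ijkl g_i g_j g_k g_l = 16 sum_q rho(x_q)^2, hence Q s = 0.
   (2) T^g = 0 is exactly the first Bianchi identity P_ijkl = P_ikjl - P_iljk.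
       With the skew-symmetry of P in its last two slots, reordering Clifford
       words by g_k g_j = - g_j g_k - 2 delta_jk turns it into 3 Q = - 6 D,
       where D = sum P_ijjl g_i g_l is the once-contracted quadratic element.
   (3) D is the Clifford image of the contraction Ric(P)_il = sum_j P_ijjl, a
       symmetric matrix of trace -2m; hence 2 D = 4 m (a Casimir identity). *)

Section FourfoldSums.
Variables (V : zmodType) (n : nat).

Definition sum4 (F : 'I_n -> 'I_n -> 'I_n -> 'I_n -> V) : V :=
  \sum_(i < n) \sum_(j < n) \sum_(k < n) \sum_(l < n) F i j k l.

Lemma sum4_ext (F G : 'I_n -> 'I_n -> 'I_n -> 'I_n -> V) :
  (forall i j k l, F i j k l = G i j k l) -> sum4 F = sum4 G.
Proof.
move=> eqFG; apply: eq_bigr => i _; apply: eq_bigr => j _.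
by apply: eq_bigr => k _; apply: eq_bigr => l _.
Qed.

Lemma sum4D (F G : 'I_n -> 'I_n -> 'I_n -> 'I_n -> V) :
  sum4 (fun i j k l => F i j k l + G i j k l) = sum4 F + sum4 G.
Proof.
rewrite /sum4 -big_split; apply: eq_bigr => i _; rewrite -big_split.
apply: eq_bigr => j _; rewrite -big_split; apply: eq_bigr => k _.
by rewrite -big_split.
Qed.

Lemma sum4N (F : 'I_n -> 'I_n -> 'I_n -> 'I_n -> V) :
  sum4 (fun i j k l => - F i j k l) = - sum4 F.
Proof.
rewrite /sum4 -sumrN; apply: eq_bigr => i _; rewrite -sumrN.
apply: eq_bigr => j _; rewrite -sumrN; apply: eq_bigr => k _.
by rewrite -sumrN.
Qed.

End FourfoldSums.

Lemma sum_sym_offdiag (V : zmodType) n (f : 'I_n -> 'I_n -> V) :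
  (forall i j, f j i = f i j) -> (forall i, f i i = 0) ->
  \sum_(i < n) \sum_(j < n) f i j =
  (\sum_(i < n) \sum_(j < n | (i < j)%N) f i j) *+ 2.
Proof.
move=> symf diag0.
have split_row (i : 'I_n) : \sum_(j < n) f i j =
    \sum_(j < n | (i < j)%N) f i j + \sum_(j < n | (j < i)%N) f i j.
  rewrite (bigID (fun j : 'I_n => (i < j)%N)) /=; congr (_ + _).
  rewrite (bigID (fun j : 'I_n => (j < i)%N)) /= [X in _ + X]big1 ?addr0.
    by apply: eq_bigl => j; case: ltngtP.
  move=> j /andP[ij ji]; suff -> : j = i by exact: diag0.
  by apply: val_inj; apply/eqP; rewrite eqn_leq leqNgt ij leqNgt ji.
rewrite (eq_bigr _ (fun i _ => split_row i)) big_split /= mulr2n; congr (_ + _).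
rewrite (exchange_big_dep xpredT) //=; apply: eq_bigr => i _.
by apply: eq_bigr => j _; rewrite symf.
Qed.

Lemma sum_kronecker (R : pzRingType) (V : lmodType R) n (j : 'I_n)
    (F : 'I_n -> V) :
  \sum_(k < n) (j == k)%:R *: F k = F j.
Proof.
rewrite (bigD1 j) //= eqxx scale1r big1 ?addr0 // => k.
by rewrite eq_sym => /negbTE ->; rewrite scale0r.
Qed.

Lemma scalerC (R : comPzRingType) (V : lmodType R) (a b : R) (v : V) :
  a *: (b *: v) = b *: (a *: v).
Proof. by rewrite !scalerA mulrC. Qed.

Definition tensor_square (R : pzRingType) n m (x : 'I_m -> 'M[R]_n)
    (i j k l : 'I_n) : R :=
  \sum_(q < m) x q i j * x q k l.

Section CliffordAlgebra.
Variables (F : fieldType) (n d : nat) (gam : 'I_n -> 'M[F]_d).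

Local Notation e2 i j := (gam i *m gam j).
Local Notation e4 i j k l := (gam i *m gam j *m gam k *m gam l).
Local Notation tensor := ('I_n -> 'I_n -> 'I_n -> 'I_n -> F).

Definition clifford_form (A : 'M[F]_n) : 'M[F]_d :=
  \sum_(i < n) \sum_(j < n) A i j *: e2 i j.

Definition clifford_tensor (f : tensor) : 'M[F]_d :=
  sum4 (fun i j k l => f i j k l *: e4 i j k l).

Definition contract23 (f : tensor) : 'M[F]_d :=
  \sum_(i < n) \sum_(j < n) \sum_(l < n) f i j j l *: e2 i l.

Definition contract24 (f : tensor) : 'M[F]_d :=
  \sum_(i < n) \sum_(j < n) \sum_(k < n) f i j k j *: e2 i k.

Lemma clifford_tensor_tensor_square m (x : 'I_m -> 'M[F]_n) :
  clifford_tensor (tensor_square x) =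
  \sum_(q < m) clifford_form (x q) *m clifford_form (x q).
Proof.
transitivity (\sum_(q < m) \sum_(i < n) \sum_(j < n) \sum_(k < n) \sum_(l < n)
   (x q i j * x q k l) *: e4 i j k l).
  symmetry; rewrite exchange_big; apply: eq_bigr => i _.
  rewrite exchange_big; apply: eq_bigr => j _.
  rewrite exchange_big; apply: eq_bigr => k _.
  by rewrite exchange_big; apply: eq_bigr => l _; rewrite scaler_suml.
apply: eq_bigr => q _; rewrite mulmx_suml; apply: eq_bigr => i _.
rewrite mulmx_suml; apply: eq_bigr => j _.
rewrite -scalemxAl mulmx_sumr scaler_sumr; apply: eq_bigr => k _.
rewrite mulmx_sumr scaler_sumr; apply: eq_bigr => l _.
by rewrite -scalemxAr scalerA !mulmxA.
Qed.

Hypothesis gam_clifford :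
  forall i j, gam i *m gam j + gam j *m gam i = (- 2 * (i == j)%:R)%:M.

Lemma gam_anticomm j k :
  gam k *m gam j = - (gam j *m gam k) + (j == k)%:R *: (-2)%:M.
Proof.
rewrite -[gam k *m gam j](addKr (gam j *m gam k)) gam_clifford.
by rewrite scale_scalar_mx mulrC.
Qed.

Lemma e4_swap23 i j k l :
  e4 i k j l = - e4 i j k l + (j == k)%:R *: (-2 *: e2 i l).
Proof.
rewrite -(mulmxA (gam i)) gam_anticomm mulmxDr mulmxDl mulmxN mulNmx !mulmxA.
by rewrite -scalemxAr -scalemxAl mul_mx_scalar -scalemxAl.
Qed.

Lemma e4_rotate i j k l :
  e4 i k l j = e4 i j k l - (j == k)%:R *: (-2 *: e2 i l)
               + (j == l)%:R *: (-2 *: e2 i k).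
Proof.
rewrite -(mulmxA _ (gam l)) (gam_anticomm j l) mulmxDr mulmxN !mulmxA.
by rewrite (e4_swap23 i j k l) opprD opprK -scalemxAr mul_mx_scalar.
Qed.

Lemma sum4_kronecker23 (f : tensor) :
  sum4 (fun i j k l => (j == k)%:R *: (f i j k l *: (-2 *: e2 i l))) =
  -2 *: contract23 f.
Proof.
rewrite /sum4 scaler_sumr; apply: eq_bigr => i _; rewrite scaler_sumr.
apply: eq_bigr => j _; under eq_bigr do rewrite -scaler_sumr.
by rewrite sum_kronecker scaler_sumr; apply: eq_bigr => l _; rewrite scalerC.
Qed.

Lemma clifford_tensor_swap23 (f : tensor) :
  clifford_tensor (fun i j k l => f i k j l) =
  - clifford_tensor f + -2 *: contract23 f.
Proof.
have -> : clifford_tensor (fun i j k l => f i k j l) =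
          sum4 (fun i j k l => f i j k l *: e4 i k j l).
  by apply: eq_bigr => i _; exact: exchange_big.
rewrite -sum4_kronecker23 -sum4N -sum4D; apply: sum4_ext => i j k l.
by rewrite e4_swap23 scalerDr scalerN scalerC.
Qed.

Lemma clifford_tensor_rotate (f : tensor) :
  clifford_tensor (fun i j k l => f i l j k) =
  clifford_tensor f - -2 *: contract23 f + -2 *: contract24 f.
Proof.
have -> : clifford_tensor (fun i j k l => f i l j k) =
          sum4 (fun i j k l => f i j k l *: e4 i k l j).
  apply: eq_bigr => i _; under eq_bigr do rewrite exchange_big.
  by rewrite exchange_big.
have -> : -2 *: contract24 f =
          sum4 (fun i j k l => (j == l)%:R *: (f i j k l *: (-2 *: e2 i k))).
  rewrite /sum4 scaler_sumr; apply: eq_bigr => i _; rewrite scaler_sumr.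
  apply: eq_bigr => j _; rewrite scaler_sumr; apply: eq_bigr => k _.
  by rewrite sum_kronecker scalerC.
rewrite -sum4_kronecker23 -sum4N -!sum4D; apply: sum4_ext => i j k l.
by rewrite e4_rotate !scalerDr scalerN !(scalerC (f _ _ _ _)).
Qed.

Lemma contract24_skew (f : tensor) :
  (forall i j k l, f i j l k = - f i j k l) -> contract24 f = - contract23 f.
Proof.
move=> skew; rewrite /contract23 -sumrN; apply: eq_bigr => i _.
rewrite -sumrN; apply: eq_bigr => j _; rewrite -sumrN; apply: eq_bigr => k _.
by rewrite skew scaleNr.
Qed.

(* Writing Q through the Bianchi identity and reordering
   both Clifford words gives Q = - 2 Q - 6 D. *)
Lemma clifford_tensor_bianchi (f : tensor) :
  (forall i j k l, f i j k l = f i k j l - f i l j k) ->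
  (forall i j k l, f i j l k = - f i j k l) ->
  clifford_tensor f *+ 3 = - (contract23 f *+ 6).
Proof.
move=> bianchi skew.
have Q_split : clifford_tensor f = clifford_tensor (fun i j k l => f i k j l)
                             - clifford_tensor (fun i j k l => f i l j k).
  rewrite /clifford_tensor -sum4N -sum4D; apply: sum4_ext => i j k l.
  by rewrite -scalerBl -bianchi.
move: Q_split; rewrite (clifford_tensor_swap23 f) (clifford_tensor_rotate f).
rewrite (contract24_skew skew).
set Q := clifford_tensor f; set D := contract23 f.
rewrite scalerN !scaleNr !scaler_nat !opprK => eqQ.
rewrite mulrS {1}eqQ mulr2n !opprD !addrA !(addrAC _ (- D) Q) subrK.
by rewrite !(addrAC _ (- D) Q) addNr add0r.
Qed.

Lemma clifford_form_sym (M : 'M[F]_n) :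
  M^T = M -> clifford_form M *+ 2 = \tr M *: (-2)%:M.
Proof.
move=> symM; rewrite mulr2n [X in _ + X]exchange_big /= -big_split /=.
rewrite /mxtrace scaler_suml; apply: eq_bigr => i _; rewrite -big_split /=.
under eq_bigr => l _.
  have -> : M l i = M i l by rewrite -[in LHS]symM mxE.
  rewrite -scalerDr gam_clifford mulrC -scale_scalar_mx scalerC.
over.
by rewrite sum_kronecker.
Qed.

Definition ricci (f : tensor) : 'M[F]_n := \matrix_(i, l) \sum_(j < n) f i j j l.

Lemma contract23_ricci (f : tensor) : contract23 f = clifford_form (ricci f).
Proof.
apply: eq_bigr => i _; rewrite exchange_big; apply: eq_bigr => l _.
by rewrite mxE scaler_suml.
Qed.

End CliffordAlgebra.

Section SkewForms.
Variables (C : numClosedFieldType) (n : nat).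

Lemma skew_mxE (A : 'M[C]_n) : skew_mx A -> forall i j, A j i = - A i j.
Proof.
by move=> skA i j; have := congr1 (fun M : 'M[C]_n => M i j) skA; rewrite !mxE.
Qed.

Lemma skew_trace_sq (A : 'M[C]_n) :
  skew_mx A -> \sum_(i < n) \sum_(j < n) A i j * A j i = - (form_dot A A *+ 2).
Proof.
move=> /skew_mxE skA; have diag0 i : A i i = 0.
  apply/eqP; have : A i i *+ 2 == 0 by rewrite mulr2n {1}skA addNr.
  by rewrite mulrn_eq0.
rewrite /form_dot -sum_sym_offdiag.
- rewrite -sumrN; apply: eq_bigr => i _; rewrite -sumrN; apply: eq_bigr => j _.
  by rewrite (skA i j) mulrN.
- by move=> i j; rewrite (skA i j) mulrNN.
- by move=> i; rewrite diag0 mulr0.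
Qed.

Lemma wedge22_diag (A : 'M[C]_n) i j k l :
  wedge22 A A i j k l = (A i j * A k l - A i k * A j l + A i l * A j k) *+ 2.
Proof. by rewrite /wedge22 mulr2n; ring. Qed.

Variables (m : nat) (x : 'I_m -> 'M[C]_n).

Lemma char_form_bianchi :
  (forall i j k l, char_form x i j k l = 0) ->
  forall i j k l, tensor_square x i j k l =
                  tensor_square x i k j l - tensor_square x i l j k.
Proof.
move=> T0 i j k l; have := T0 i j k l; rewrite /char_form.
under eq_bigr do rewrite wedge22_diag.
rewrite sumrMnl -mulr_natr => /eqP; rewrite mulf_eq0 pnatr_eq0 orbF.
rewrite !big_split /= !sumrN addrAC subr_eq0 /tensor_square => /eqP <-.
by rewrite addrK.
Qed.

Hypothesis x_skew : forall q, skew_mx (x q).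

Lemma tensor_square_skew i j k l :
  tensor_square x i j l k = - tensor_square x i j k l.
Proof.
rewrite -sumrN; apply: eq_bigr => q _.
by rewrite (skew_mxE (x_skew q) k) mulrN.
Qed.

(* Ric(P)_il = sum_q (x_q^2)_il is symmetric ... *)
Lemma ricci_tensor_square_sym :
  (ricci (tensor_square x))^T = ricci (tensor_square x).
Proof.
apply/matrixP => i l; rewrite !mxE; apply: eq_bigr => j _; apply: eq_bigr => q _.
by rewrite (skew_mxE (x_skew q) j i) (skew_mxE (x_skew q) l j) mulrNN mulrC.
Qed.

Lemma ricci_tensor_square_trace :
  (forall q, form_dot (x q) (x q) = 1) ->
  \tr (ricci (tensor_square x)) = - (m%:R *+ 2).
Proof.
move=> x_unit; rewrite /mxtrace.
under eq_bigr do rewrite mxE exchange_big.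
rewrite exchange_big /=.
under eq_bigr => q _ do rewrite (skew_trace_sq (x_skew q)) x_unit.
by rewrite sumrN sumr_const card_ord -mulrnA mulnC mulrnA.
Qed.

End SkewForms.

Lemma casimir_tensor_square (C : numClosedFieldType) n d
    (gam : 'I_n -> 'M[C]_d) m (x : 'I_m -> 'M[C]_n) :
  (forall i j, gam i *m gam j + gam j *m gam i = (- 2 * (i == j)%:R)%:M) ->
  (forall q, skew_mx (x q)) -> (forall q, form_dot (x q) (x q) = 1) ->
  contract23 gam (tensor_square x) *+ 2 = (m%:R *+ 4)%:M.
Proof.
move=> gam_cl x_skew x_unit.
rewrite contract23_ricci.
rewrite (clifford_form_sym gam_cl (ricci_tensor_square_sym x_skew)).
rewrite (ricci_tensor_square_trace x_skew x_unit) scale_scalar_mx.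
by rewrite mulNr mulrN opprK mulr_natr -mulrnA.
Qed.

Section SpinRepresentation.
Variables (C : numClosedFieldType) (n : nat).

Lemma clifford_form_spin_act (gam : 'I_n -> 'M[C]_(spin_dim n)) (A : 'M[C]_n) :
  clifford_form gam A = 4%:R *: spin_act gam A.
Proof.
rewrite /spin_act scaler_sumr; apply: eq_bigr => i _.
rewrite scaler_sumr; apply: eq_bigr => j _.
by rewrite scalerA mulrC divfK // pnatr_eq0.
Qed.

Lemma clifford_tensor_annihilates (gam : 'I_n -> 'M[C]_(spin_dim n))
    m (x : 'I_m -> 'M[C]_n) (s : 'cV[C]_(spin_dim n)) :
  (forall q, spin_act gam (x q) *m s = 0) ->
  clifford_tensor gam (tensor_square x) *m s = 0.
Proof.
move=> x_ann; rewrite clifford_tensor_tensor_square mulmx_suml big1 // => q _.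
by rewrite -mulmxA {2}clifford_form_spin_act -scalemxAl x_ann scaler0 mulmx0.
Qed.


End SpinRepresentation.

Lemma orthonormal_basis_nonempty (C : numClosedFieldType) n
    (g : 'M[C]_n -> Prop) m (x : 'I_m -> 'M[C]_n) :
  nonzero_sub g -> is_orthonormal_basis g x -> (0 < m)%N.
Proof.
move=> [A [gA A_nz]] [_ _ x_span]; case: (posnP m) => // m0.
have [c [_ eA]] := x_span A gA; move: A_nz; rewrite eA big1 ?eqxx //.
by move=> k; have := ltn_ord k; rewrite {2}m0.
Qed.

Theorem proposition7p1 (C : numClosedFieldType) (n : nat)
  (g : 'M[C]_n -> Prop) (m : nat) (x : 'I_m -> 'M[C]_n) :
  is_lie_subalgebra g ->
  nonzero_sub g ->
  is_orthonormal_basis g x ->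
  (exists gam : 'I_n -> 'M[C]_(spin_dim n),
     clifford_rep gam /\
     exists s : 'cV[C]_(spin_dim n),
       s != 0 /\ (forall A, g A -> spin_act gam A *m s = 0)) ->
  ~ (forall i j k l : 'I_n, char_form x i j k l = 0).
Proof.
move=> [g_so _ _ _] g_nz x_onb [gam [gam_cl [s [s_nz s_ann]]]] T0.
have m_pos := orthonormal_basis_nonempty g_nz x_onb.
have [x_g x_on _] := x_onb.
have x_skew q : skew_mx (x q) by have [] := g_so _ (x_g q).
have x_unit q : form_dot (x q) (x q) = 1 by rewrite x_on eqxx.
have Q_s := clifford_tensor_annihilates (fun q => s_ann _ (x_g q)).
have := clifford_tensor_bianchi gam_cl (char_form_bianchi T0)
                                (tensor_square_skew x_skew).
rewrite -[6%N]/(2 * 3)%N mulrnA (casimir_tensor_square gam_cl x_skew x_unit).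
(* applied to s: 0 = 3 Q s = - 12 m s *)
move=> /(congr1 (mulmxr s)); rewrite linearN !linearMn /= Q_s mul0rn.
rewrite mul_scalar_mx mulNrn scalerMnl => /eqP.
rewrite eq_sym oppr_eq0 scaler_eq0 (negbTE s_nz) orbF -!mulrnA.
by rewrite pnatr_eq0 !muln_eq0 (gtn_eqF m_pos).
Qed.
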